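(* Let $\kappa$ be an infinite regular cardinal and let $X$ and $Y$ be $\kappa$-join semilattices. Then $(X,Y)$ is a Morita pair between some m-regular $\kappa$-quantales if and only if there exist surjective $\kappa$-join semilattice morphisms $p: X\otimes_\kappa Y\otimes_\kappa X\to X$ and $q: Y\otimes_\kappa X\otimes_\kappa Y\to Y$ such that, for all $x_1,x_2,x_3\in X$ and $y_1,y_2,y_3\in Y$: 1. $p(p(x_1\otimes y_1\otimes x_2)\otimes y_2\otimes x_3)=p(x_1\otimes q(y_1\otimes x_2\otimes y_2)\otimes x_3)=p(x_1\otimes y_1\otimes p(x_2\otimes y_2\otimes x_3))$; 2. $q(q(y_1\otimes x_1\otimes y_2)\otimes x_2\otimes y_3)=q(y_1\otimes p(x_1\otimes y_2\otimes x_2)\otimes y_3)=q(y_1\otimes x_1\otimes q(y_2\otimes x_2\otimes y_3))$; 3. if $p(u\otimes v\otimes x_1)=p(u\otimes v\otimes x_2)$ for all $u\in X$, $v\in Y$, then $x_1=x_2$; 4. if $p(x_1\otimes v\otimes u)=p(x_2\otimes v\otimes u)$ for all $u\in X$, $v\in Y$, then $x_1=x_2$; 5. if $q(v\otimes u\otimes y_1)=q(v\otimes u\otimes y_2)$ for all $v\in Y$, $u\in X$, then $y_1=y_2$; 6. if $q(y_1\otimes u\otimes v)=q(y_2\otimes u\otimes v)$ for all $u\in X$, $v\in Y$, then $y_1=y_2$.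
   Context: $\kappa$ is an infinite regular cardinal. A $\kappa$-join semilattice is a poset in which every subset of cardinality $<\kappa$ has a join; morphisms preserve such joins. $\otimes_\kappa$ denotes the tensor product of $\kappa$-join semilattices (universal for maps preserving $\kappa$-joins in each variable separately). A $\kappa$-quantale is a $\kappa$-join semilattice with an associative multiplication distributing over $\kappa$-joins on both sides. A right $\kappa$-module over a $\kappa$-quantale $A$ is a $\kappa$-join semilattice $M$ with an action $M\times A\to M$ satisfying $m\cdot(ab)=(m\cdot a)\cdot b$ and preserving $\kappa$-joins in each variable; left modules dually. A right module is essential if every element is a $\kappa$-join of elements $m\cdot a$, separated if ($m\cdot a=n\cdot a$ for all $a\in A$) implies $m=n$, m-regular if both; dually on the left; an m-regular $A,B$-$\kappa$-bimodule is an m-regular left $A$-module and m-regular right $B$-module with commuting actions; a $\kappa$-quantale is m-regular if it is m-regular as a bimodule over itself. A Morita context between m-regular $\kappa$-quantales $A,B$ is $(A,B,X,Y,(-,-),[-,-])$ with $X$ an m-regular $A,B$-$\kappa$-bimodule, $Y$ an m-regular $B,A$-$\kappa$-bimodule, and $\kappa$-bimodule maps $(-,-):X\times Y\to A$, $[-,-]:Y\times X\to B$ satisfying $(x\cdot b,y)=(x,b\cdot y)$, $[y\cdot a,x]=[y,a\cdot x]$, $(x_1,y)\cdot x_2=x_1\cdot[y,x_2]$, $[y_1,x]\cdot y_2=y_1\cdot(x,y_2)$, and such that the induced maps $X\otimes_\kappa Y\to A$, $Y\otimes_\kappa X\to B$ are surjective; $(X,Y)$ is then a Morita pair. *)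

Definition card_le (A B : Type) : Prop :=
  exists f : A -> B, forall a a', f a = f a' -> a = a'.
Definition card_lt (A B : Type) : Prop := card_le A B /\ ~ card_le B A.

(* The cardinal kappa = |K| is infinite and regular: a union of fewer than
   kappa sets, each of cardinality < kappa, has cardinality < kappa. *)
Definition infinite_regular (K : Type) : Prop :=
  card_le nat K /\
  forall (I : Type) (J : I -> Type),
    card_lt I K -> (forall i, card_lt (J i) K) -> card_lt {i : I & J i} K.

Definition small (K : Type) {T : Type} (S : T -> Prop) : Prop :=
  card_lt {x : T | S x} K.

Definition is_lub {T : Type} (le : T -> T -> Prop) (S : T -> Prop) (j : T) : Prop :=
  (forall s, S s -> le s j) /\ (forall u, (forall s, S s -> le s u) -> le j u).

Definition img {T U : Type} (f : T -> U) (S : T -> Prop) : U -> Prop :=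
  fun u => exists t, S t /\ u = f t.

Record ksl (K : Type) := KSL {
  car :> Type;
  le : car -> car -> Prop;
  le_refl : forall x, le x x;
  le_trans : forall x y z, le x y -> le y z -> le x z;
  le_antisym : forall x y, le x y -> le y x -> x = y;
  join_ex : forall S : car -> Prop, small K S -> exists j, is_lub le S j
}.
Arguments le {K} _ _ _.

Section Morphisms.
Variable K : Type.

Definition kmorph {X Y : ksl K} (f : X -> Y) : Prop :=
  forall (S : X -> Prop) (j : X), small K S -> is_lub (le X) S j ->
    is_lub (le Y) (img f S) (f j).

Definition kbimorph {X Y Z : ksl K} (f : X -> Y -> Z) : Prop :=
  (forall y, kmorph (fun x => f x y)) /\ (forall x, kmorph (f x)).

Definition ktrimorph {X Y W Z : ksl K} (f : X -> Y -> W -> Z) : Prop :=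
  (forall y w, kmorph (fun x => f x y w)) /\
  (forall x w, kmorph (fun y => f x y w)) /\
  (forall x y, kmorph (f x y)).

Definition is_tensor2 (X Y T : ksl K) (t : X -> Y -> T) : Prop :=
  kbimorph t /\
  forall (Z : ksl K) (f : X -> Y -> Z), kbimorph f ->
    exists g : T -> Z, kmorph g /\ (forall x y, g (t x y) = f x y) /\
      forall g' : T -> Z, kmorph g' -> (forall x y, g' (t x y) = f x y) ->
        forall z, g' z = g z.

Definition is_tensor3 (X Y W T : ksl K) (t : X -> Y -> W -> T) : Prop :=
  ktrimorph t /\
  forall (Z : ksl K) (f : X -> Y -> W -> Z), ktrimorph f ->
    exists g : T -> Z, kmorph g /\ (forall x y w, g (t x y w) = f x y w) /\
      forall g' : T -> Z, kmorph g' -> (forall x y w, g' (t x y w) = f x y w) ->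
        forall z, g' z = g z.

Definition surj {A B : Type} (f : A -> B) : Prop := forall b, exists a, f a = b.

Definition is_kquantale (A : ksl K) (mul : A -> A -> A) : Prop :=
  kbimorph mul /\ forall a b c, mul a (mul b c) = mul (mul a b) c.

Definition is_rmodule (A : ksl K) (mul : A -> A -> A) (M : ksl K)
    (act : M -> A -> M) : Prop :=
  kbimorph act /\ forall m a b, act m (mul a b) = act (act m a) b.

Definition is_lmodule (A : ksl K) (mul : A -> A -> A) (M : ksl K)
    (act : A -> M -> M) : Prop :=
  kbimorph act /\ forall a b m, act (mul a b) m = act a (act b m).

Definition r_essential (A M : ksl K) (act : M -> A -> M) : Prop :=
  forall m : M, exists S : M -> Prop, small K S /\
    (forall z, S z -> exists n a, z = act n a) /\ is_lub (le M) S m.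
Definition r_separated (A M : ksl K) (act : M -> A -> M) : Prop :=
  forall m n : M, (forall a, act m a = act n a) -> m = n.
Definition l_essential (A M : ksl K) (act : A -> M -> M) : Prop :=
  forall m : M, exists S : M -> Prop, small K S /\
    (forall z, S z -> exists a n, z = act a n) /\ is_lub (le M) S m.
Definition l_separated (A M : ksl K) (act : A -> M -> M) : Prop :=
  forall m n : M, (forall a, act a m = act a n) -> m = n.

Definition r_mregular A M act := r_essential A M act /\ r_separated A M act.
Definition l_mregular A M act := l_essential A M act /\ l_separated A M act.

Definition mregular_bimodule (A : ksl K) (mulA : A -> A -> A)
    (B : ksl K) (mulB : B -> B -> B) (M : ksl K)
    (lact : A -> M -> M) (ract : M -> B -> M) : Prop :=
  is_lmodule A mulA M lact /\ is_rmodule B mulB M ract /\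
  (forall a m b, ract (lact a m) b = lact a (ract m b)) /\
  l_mregular A M lact /\ r_mregular B M ract.

Definition mregular_kquantale (A : ksl K) (mul : A -> A -> A) : Prop :=
  is_kquantale A mul /\ mregular_bimodule A mul A mul A mul mul.

(* (X, Y) is a Morita pair between some m-regular kappa-quantales; TXY, TYX
   are given tensor products X (x) Y and Y (x) X. *)
Definition morita_pair (X Y : ksl K)
    (TXY : ksl K) (tXY : X -> Y -> TXY) (TYX : ksl K) (tYX : Y -> X -> TYX) : Prop :=
  exists (A : ksl K) (mulA : A -> A -> A) (B : ksl K) (mulB : B -> B -> B)
    (lX : A -> X -> X) (rX : X -> B -> X) (lY : B -> Y -> Y) (rY : Y -> A -> Y)
    (pr : X -> Y -> A) (br : Y -> X -> B),
    mregular_kquantale A mulA /\ mregular_kquantale B mulB /\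
    mregular_bimodule A mulA B mulB X lX rX /\
    mregular_bimodule B mulB A mulA Y lY rY /\
    kbimorph pr /\ kbimorph br /\
    (forall a x y, pr (lX a x) y = mulA a (pr x y)) /\
    (forall x y a, pr x (rY y a) = mulA (pr x y) a) /\
    (forall b y x, br (lY b y) x = mulB b (br y x)) /\
    (forall y x b, br y (rX x b) = mulB (br y x) b) /\
    (forall x b y, pr (rX x b) y = pr x (lY b y)) /\
    (forall y a x, br (rY y a) x = br y (lX a x)) /\
    (forall x1 y x2, rX x1 (br y x2) = lX (pr x1 y) x2) /\
    (forall y1 x y2, rY y1 (pr x y2) = lY (br y1 x) y2) /\
    (exists g : TXY -> A, kmorph g /\ (forall x y, g (tXY x y) = pr x y) /\ surj g) /\
    (exists h : TYX -> B, kmorph h /\ (forall y x, h (tYX y x) = br y x) /\ surj h).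

End Morphisms.

From Stdlib Require Import ClassicalEpsilon FunctionalExtensionality ProofIrrelevance.

(* Given a Morita context, p (x ⊗ y ⊗ x') := x·[y,x'] = (x,y)·x' and dually
   q (y ⊗ x ⊗ y') := y·(x,y') = [y,x]·y'.  Conditions 1–2 are then the Morita identities,
   3–6 are the separatedness of X and Y, and surjectivity comes from essentiality together
   with the surjectivity of X ⊗ Y -> A and Y ⊗ X -> B.

   Conversely, A is recovered as the set of operators p (t ⊗ –) on X, t in X ⊗ Y: it is the
   image of a κ-join map into the κ-join semilattice of maps X -> X, and by associativity of p
   it is closed under composition, which is the multiplication.  A acts on X by evaluation and
   on Y through q (– ⊗ t), and (x, y) := p (x ⊗ y ⊗ –); B is built symmetrically from q.
   Every remaining axiom is checked after applying p or q, which separate points by 3–6. *)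

Lemma proj1_sig_inj {T : Type} {P : T -> Prop} (a b : {x | P x}) :
  proj1_sig a = proj1_sig b -> a = b.
Proof. apply eq_sig_hprop. intros; apply proof_irrelevance. Qed.

Lemma card_le_trans (A B C : Type) : card_le A B -> card_le B C -> card_le A C.
Proof. intros [f hf] [g hg]. exists (fun a => g (f a)). auto. Qed.

Lemma is_lub_ext {T : Type} (le : T -> T -> Prop) (S S' : T -> Prop) (j : T) :
  (forall z, S z <-> S' z) -> is_lub le S j -> is_lub le S' j.
Proof.
  intros hSS' [hub hleast]. split.
  - intros s hs. now apply hub, hSS'.
  - intros u hu. apply hleast. intros s hs. now apply hu, hSS'.
Qed.

Lemma img_comp {T U V : Type} (f : T -> U) (g : U -> V) (S : T -> Prop) (z : V) :
  img g (img f S) z <-> img (fun t => g (f t)) S z.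
Proof.
  split.
  - intros (u & (t & ht & ->) & ->). now exists t.
  - intros (t & ht & ->). exists (f t). split; [now exists t | reflexivity].
Qed.

Lemma img_ext {T U : Type} (f g : T -> U) (S : T -> Prop) (z : U) :
  (forall t, S t -> f t = g t) -> img f S z <-> img g S z.
Proof.
  intros hfg. split; intros (t & ht & ->); exists t; split; auto. now rewrite hfg.
Qed.

Section Kappa.
Variable K : Type.
Hypothesis hK : infinite_regular K.

Lemma card_lt_of_le (A B : Type) : card_le A B -> card_lt B K -> card_lt A K.
Proof.
  intros hAB [hBK hKB]. split; [now apply card_le_trans with B|].
  intro hKA. apply hKB. now apply card_le_trans with A.
Qed.

Lemma small_sub {T : Type} (S S' : T -> Prop) :
  (forall z, S z -> S' z) -> small K S' -> small K S.
Proof.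
  intros hSS'. apply card_lt_of_le.
  exists (fun x => exist S' (proj1_sig x) (hSS' _ (proj2_sig x))).
  intros a a' e. apply proj1_sig_inj. exact (f_equal (@proj1_sig _ _) e).
Qed.

Lemma small_range {T U : Type} (S : T -> Prop) (c : {t | S t} -> U) :
  small K S -> small K (fun u => exists x, u = c x).
Proof.
  apply card_lt_of_le.
  destruct (choice (fun (u : {u | exists x, u = c x}) x => proj1_sig u = c x)) as [c' hc'].
  { intros [u hu]. exact hu. }
  exists c'. intros a a' e. apply proj1_sig_inj. now rewrite hc', hc', e.
Qed.

Lemma small_img {T U : Type} (f : T -> U) (S : T -> Prop) : small K S -> small K (img f S).
Proof.
  intro hS. eapply small_sub; [|exact (small_range S (fun x => f (proj1_sig x)) hS)].
  intros u (t & ht & ->). now exists (exist S t ht).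
Qed.

Lemma small_singleton {T : Type} (a : T) : small K (fun z => z = a).
Proof.
  destruct hK as [[f hf] _]. split.
  - exists (fun _ => f 0). intros x x' _. apply proj1_sig_inj.
    now rewrite (proj2_sig x), (proj2_sig x').
  - intros [g hg]. assert (e : f 0 = f 1).
    { apply hg, proj1_sig_inj. now rewrite (proj2_sig (g (f 0))), (proj2_sig (g (f 1))). }
    discriminate (hf _ _ e).
Qed.

Lemma small_union {T I : Type} (W : I -> T -> Prop) :
  card_lt I K -> (forall i, small K (W i)) -> small K (fun w => exists i, W i w).
Proof.
  intros hI hW. apply card_lt_of_le with (B := {i : I & {w | W i w}}).
  2: exact (proj2 hK I _ hI hW).
  destruct (choice (fun (w : {w | exists i, W i w}) (x : {i : I & {w | W i w}}) =>
                      proj1_sig (projT2 x) = proj1_sig w)) as [c hc].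
  { intros [w [i hi]]. now exists (existT _ i (exist _ w hi)). }
  exists c. intros a a' e. apply proj1_sig_inj. now rewrite <- hc, e, hc.
Qed.

Lemma is_lub_unique (X : ksl K) (S : X -> Prop) (a b : X) :
  is_lub (le X) S a -> is_lub (le X) S b -> a = b.
Proof. intros [hua hla] [hub hlb]. apply le_antisym; auto. Qed.

Lemma kmorph_id {X : ksl K} : kmorph K (fun x : X => x).
Proof.
  intros S j _ hj. apply (is_lub_ext _ S); [|exact hj].
  intro z. split; [intro hz; now exists z | now intros (t & ht & ->)].
Qed.

Lemma kmorph_comp {X Y Z : ksl K} {f : X -> Y} {g : Y -> Z} :
  kmorph K f -> kmorph K g -> kmorph K (fun x => g (f x)).
Proof.
  intros hf hg S j hS hj. apply (is_lub_ext _ _ _ _ (img_comp f g S)).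
  apply hg; [now apply small_img | now apply hf].
Qed.

Lemma kmorph_ext {X Y : ksl K} (f g : X -> Y) :
  kmorph K f -> (forall x, f x = g x) -> kmorph K g.
Proof. intros hf hfg. now replace g with f by (now apply functional_extensionality). Qed.

Definition join_closed {X : ksl K} (P : X -> Prop) : Prop :=
  forall S j, small K S -> is_lub (le X) S j -> (forall s, S s -> P s) -> P j.

Lemma join_closed_comp {X Z : ksl K} (F : X -> Z) (P : Z -> Prop) :
  kmorph K F -> join_closed P -> join_closed (fun x => P (F x)).
Proof.
  intros hF hP S j hS hj hSP. apply (hP (img F S)); [now apply small_img | now apply hF |].
  intros z (s & hs & ->). now apply hSP.
Qed.

Lemma join_closed_eq {X Z : ksl K} (F G : X -> Z) :
  kmorph K F -> kmorph K G -> join_closed (fun x => F x = G x).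
Proof.
  intros hF hG S j hS hj hSFG. apply (is_lub_unique _ (img F S)); [now apply hF|].
  apply (is_lub_ext _ (img G S)); [|now apply hG].
  intro z. symmetry. now apply img_ext.
Qed.

Lemma join_closed_image {W V Z : ksl K} (F : W -> Z) (G : V -> Z) :
  kmorph K F -> kmorph K G -> join_closed (fun v => exists w, F w = G v).
Proof.
  intros hF hG S j hS hj hSF.
  destruct (choice (fun (s : {s | S s}) w => F w = G (proj1_sig s))) as [c hc].
  { intros [s hs]. exact (hSF s hs). }
  pose proof (small_range S c hS) as hR.
  destruct (join_ex K W _ hR) as [r hr]. exists r.
  apply (is_lub_unique _ (img F (fun w => exists s, w = c s))); [now apply hF|].
  apply (is_lub_ext _ (img G S)); [|now apply hG].
  intro z. split.
  - intros (s & hs & ->). exists (c (exist S s hs)). split; [now exists (exist S s hs)|].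
    now rewrite hc.
  - intros (w & (s & ->) & ->). exists (proj1_sig s). split; [exact (proj2_sig s)|]. apply hc.
Qed.

Definition small_join_of {X : ksl K} (P : X -> Prop) (x : X) : Prop :=
  exists S, small K S /\ (forall z, S z -> P z) /\ is_lub (le X) S x.

Lemma small_join_of_mem {X : ksl K} (P : X -> Prop) (x : X) : P x -> small_join_of P x.
Proof.
  intro hx. exists (fun z => z = x). split; [apply small_singleton|split].
  - now intros z ->.
  - split; [intros s ->; apply le_refl | intros u hu; now apply hu].
Qed.

Lemma join_closed_small_join_of {X : ksl K} (P : X -> Prop) : join_closed (small_join_of P).
Proof.
  intros S j hS hj hSP.
  destruct (choice (fun (s : {s | S s}) (W : X -> Prop) =>
              small K W /\ (forall z, W z -> P z) /\ is_lub (le X) W (proj1_sig s))) as [W hW].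
  { intros [s hs]. exact (hSP s hs). }
  exists (fun w => exists s, W s w). split; [|split].
  - exact (small_union W hS (fun s => proj1 (hW s))).
  - intros z [s hz]. destruct (hW s) as (_ & hWP & _). exact (hWP z hz).
  - split.
    + intros z [s hz]. destruct (hW s) as (_ & _ & hub & _).
      apply (le_trans K X _ (proj1_sig s)); [exact (hub z hz) | apply hj, proj2_sig].
    + intros u hu. apply hj. intros s hs. destruct (hW (exist S s hs)) as (_ & _ & _ & hleast).
      apply hleast. intros z hz. apply hu. now exists (exist S s hs).
Qed.

Section SubSemilattice.
Variables (Z : ksl K) (P : Z -> Prop).
Hypothesis hP : join_closed P.

Definition sub_le (a b : {z | P z}) : Prop := le Z (proj1_sig a) (proj1_sig b).

Lemma sub_join_ex (S : {z | P z} -> Prop) :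
  small K S -> exists j : {z | P z}, is_lub (le Z) (img (@proj1_sig _ _) S) (proj1_sig j).
Proof.
  intro hS. pose proof (small_img (@proj1_sig _ _) S hS) as hS'.
  destruct (join_ex K Z _ hS') as [j hj].
  assert (hPj : P j) by (apply (hP _ _ hS' hj); intros s (w & _ & ->); apply proj2_sig).
  now exists (exist P j hPj).
Qed.

Lemma is_lub_sub (S : {z | P z} -> Prop) (w : {z | P z}) :
  is_lub (le Z) (img (@proj1_sig _ _) S) (proj1_sig w) -> is_lub sub_le S w.
Proof.
  intros [hub hleast]. split.
  - intros s hs. apply hub. now exists s.
  - intros u hu. apply hleast. intros s (v & hv & ->). now apply hu.
Qed.

Definition sub_ksl : ksl K :=
  KSL K {z | P z} sub_le
    (fun x => le_refl K Z (proj1_sig x))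
    (fun x y z => le_trans K Z (proj1_sig x) (proj1_sig y) (proj1_sig z))
    (fun x y hxy hyx => proj1_sig_inj x y (le_antisym K Z _ _ hxy hyx))
    (fun S hS => let (j, hj) := sub_join_ex S hS in ex_intro _ j (is_lub_sub S j hj)).

Lemma kmorph_val : kmorph K (fun a : sub_ksl => proj1_sig a).
Proof.
  intros S w hS hw. destruct (sub_join_ex S hS) as [j hj].
  replace w with j; [exact hj|].
  apply (is_lub_unique sub_ksl S); [now apply is_lub_sub | exact hw].
Qed.

Lemma kmorph_into_sub {X : ksl K} (f : X -> sub_ksl) :
  kmorph K (fun x => proj1_sig (f x)) -> kmorph K f.
Proof.
  intros hf S j hS hj. apply is_lub_sub.
  apply (is_lub_ext _ _ _ _ (fun z => iff_sym (img_comp f _ S z))). now apply hf.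
Qed.

End SubSemilattice.

Section FunctionSemilattice.
Variables (I : Type) (Z : ksl K).

Definition fun_le (f g : I -> Z) : Prop := forall i, le Z (f i) (g i).

Lemma is_lub_fun (S : (I -> Z) -> Prop) (f : I -> Z) :
  (forall i, is_lub (le Z) (img (fun g => g i) S) (f i)) -> is_lub fun_le S f.
Proof.
  intros hf. split.
  - intros s hs i. apply hf. now exists s.
  - intros u hu i. apply hf. intros z (s & hs & ->). now apply hu.
Qed.

Lemma pointwise_join_ex (S : (I -> Z) -> Prop) :
  small K S -> exists f, forall i, is_lub (le Z) (img (fun g => g i) S) (f i).
Proof.
  intro hS. apply (choice (fun i j => is_lub (le Z) (img (fun g => g i) S) j)).
  intro i. exact (join_ex K Z _ (small_img _ S hS)).
Qed.

Lemma fun_join_ex (S : (I -> Z) -> Prop) : small K S -> exists j, is_lub fun_le S j.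
Proof.
  intro hS. destruct (pointwise_join_ex S hS) as [f hf]. exists f. now apply is_lub_fun.
Qed.

Definition fun_ksl : ksl K :=
  KSL K (I -> Z) fun_le
    (fun f i => le_refl K Z (f i))
    (fun f g h hfg hgh i => le_trans K Z _ _ _ (hfg i) (hgh i))
    (fun f g hfg hgf => functional_extensionality f g (fun i => le_antisym K Z _ _ (hfg i) (hgf i)))
    fun_join_ex.

Lemma kmorph_eval (i : I) : kmorph K (fun g : fun_ksl => g i).
Proof.
  intros S f hS hf. destruct (pointwise_join_ex S hS) as [f' hf'].
  replace f with f'; [apply hf'|].
  apply (is_lub_unique fun_ksl S); [now apply is_lub_fun | exact hf].
Qed.

Lemma kmorph_into_fun {X : ksl K} (h : X -> fun_ksl) :
  (forall i, kmorph K (fun x => h x i)) -> kmorph K h.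
Proof.
  intros hh S j hS hj. apply is_lub_fun. intro i.
  apply (is_lub_ext _ _ _ _ (fun z => iff_sym (img_comp h _ S z))). now apply hh.
Qed.

End FunctionSemilattice.

Lemma join_closed_kmorph {X Z : ksl K} : join_closed (X := fun_ksl X Z) (fun f => kmorph K f).
Proof.
  intros F f hF hf hFk S j hS hj. split.
  - intros z (s & hs & ->). apply (kmorph_eval X Z s F f hF hf). intros w (g & hg & ->).
    apply (le_trans K Z _ (g j)).
    + apply (hFk g hg S j hS hj). now exists s.
    + apply (kmorph_eval X Z j F f hF hf). now exists g.
  - intros u hu. apply (kmorph_eval X Z j F f hF hf). intros w (g & hg & ->).
    apply (hFk g hg S j hS hj). intros z (s & hs & ->).
    apply (le_trans K Z _ (f s)); [|apply hu; now exists s].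
    apply (kmorph_eval X Z s F f hF hf). now exists g.
Qed.

Lemma kmorph_of_separating {X N Z : ksl K} (I : Type) (G : I -> N -> Z) (h : X -> N) :
  (forall i, kmorph K (G i)) -> (forall a b, (forall i, G i a = G i b) -> a = b) ->
  (forall i, kmorph K (fun x => G i (h x))) -> kmorph K h.
Proof.
  intros hG hsep hGh S j hS hj.
  destruct (join_ex K N (img h S) (small_img h S hS)) as [w hw].
  replace (h j) with w; [exact hw|].
  apply hsep. intro i. apply (is_lub_unique _ (img (fun x => G i (h x)) S)).
  - apply (is_lub_ext _ _ _ _ (img_comp h (G i) S)). apply hG; [now apply small_img | exact hw].
  - now apply hGh.
Qed.

Section Tensors.
Context {X Y W T : ksl K}.

Lemma kbimorph_comp {Z Z' : ksl K} (f : X -> Y -> Z) (g : Z -> Z') :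
  kbimorph K f -> kmorph K g -> kbimorph K (fun x y => g (f x y)).
Proof. intros [hf1 hf2] hg. split; intro; now apply kmorph_comp. Qed.

Lemma ktrimorph_comp {Z Z' : ksl K} (f : X -> Y -> W -> Z) (g : Z -> Z') :
  ktrimorph K f -> kmorph K g -> ktrimorph K (fun x y w => g (f x y w)).
Proof. intros (hf1 & hf2 & hf3) hg. split; [|split]; intros; now apply kmorph_comp. Qed.

Lemma tensor2_ext (t : X -> Y -> T) (hT : is_tensor2 K X Y T t)
    {Z : ksl K} (g1 g2 : T -> Z) :
  kmorph K g1 -> kmorph K g2 -> (forall x y, g1 (t x y) = g2 (t x y)) -> forall z, g1 z = g2 z.
Proof.
  intros hg1 hg2 e z. destruct hT as [ht huniv].
  destruct (huniv Z _ (kbimorph_comp t g1 ht hg1)) as (g & _ & _ & hg).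
  rewrite (hg g1 hg1), (hg g2 hg2); auto.
Qed.

Lemma tensor3_ext (t : X -> Y -> W -> T) (hT : is_tensor3 K X Y W T t)
    {Z : ksl K} (g1 g2 : T -> Z) :
  kmorph K g1 -> kmorph K g2 -> (forall x y w, g1 (t x y w) = g2 (t x y w)) ->
  forall z, g1 z = g2 z.
Proof.
  intros hg1 hg2 e z. destruct hT as [ht huniv].
  destruct (huniv Z _ (ktrimorph_comp t g1 ht hg1)) as (g & _ & _ & hg).
  rewrite (hg g1 hg1), (hg g2 hg2); auto.
Qed.

Lemma tensor2_ind (t : X -> Y -> T) (hT : is_tensor2 K X Y T t) (P : T -> Prop) :
  join_closed P -> (forall x y, P (t x y)) -> forall z, P z.
Proof.
  intros hP ht z.
  pose (f x y := exist P (t x y) (ht x y) : sub_ksl T P hP).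
  assert (hf : kbimorph K f).
  { destruct hT as [[ht1 ht2] _]. split; intro; apply kmorph_into_sub; simpl; auto. }
  destruct (proj2 hT _ f hf) as (g & hg & g_beta & _).
  rewrite <- (tensor2_ext t hT (fun z => proj1_sig (g z)) (fun z => z)).
  - apply proj2_sig.
  - exact (kmorph_comp hg (kmorph_val T P hP)).
  - exact kmorph_id.
  - intros x y. now rewrite g_beta.
Qed.

Lemma tensor3_ind (t : X -> Y -> W -> T) (hT : is_tensor3 K X Y W T t) (P : T -> Prop) :
  join_closed P -> (forall x y w, P (t x y w)) -> forall z, P z.
Proof.
  intros hP ht z.
  pose (f x y w := exist P (t x y w) (ht x y w) : sub_ksl T P hP).
  assert (hf : ktrimorph K f).
  { destruct hT as [(ht1 & ht2 & ht3) _].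
    split; [|split]; intros; apply kmorph_into_sub; simpl; auto. }
  destruct (proj2 hT _ f hf) as (g & hg & g_beta & _).
  rewrite <- (tensor3_ext t hT (fun z => proj1_sig (g z)) (fun z => z)).
  - apply proj2_sig.
  - exact (kmorph_comp hg (kmorph_val T P hP)).
  - exact kmorph_id.
  - intros x y w. now rewrite g_beta.
Qed.

Lemma tensor2_surj_ind (t : X -> Y -> T) (hT : is_tensor2 K X Y T t)
    {Z : ksl K} (g : T -> Z) (P : Z -> Prop) :
  kmorph K g -> surj g -> join_closed P -> (forall x y, P (g (t x y))) -> forall a, P a.
Proof.
  intros hg hgs hP ht a. destruct (hgs a) as [z <-]. revert z.
  apply (tensor2_ind t hT); [now apply join_closed_comp | exact ht].
Qed.

Lemma tensor3_surj_ind (t : X -> Y -> W -> T) (hT : is_tensor3 K X Y W T t)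
    {Z : ksl K} (g : T -> Z) (P : Z -> Prop) :
  kmorph K g -> surj g -> join_closed P -> (forall x y w, P (g (t x y w))) -> forall a, P a.
Proof.
  intros hg hgs hP ht a. destruct (hgs a) as [z <-]. revert z.
  apply (tensor3_ind t hT); [now apply join_closed_comp | exact ht].
Qed.

Definition tensor2_lift {t : X -> Y -> T} (hT : is_tensor2 K X Y T t)
    {Z : ksl K} (f : X -> Y -> Z) (hf : kbimorph K f) : T -> Z :=
  proj1_sig (constructive_indefinite_description _ (proj2 hT Z f hf)).

Lemma tensor2_lift_spec {t : X -> Y -> T} (hT : is_tensor2 K X Y T t)
    {Z : ksl K} (f : X -> Y -> Z) (hf : kbimorph K f) :
  kmorph K (tensor2_lift hT f hf) /\ forall x y, tensor2_lift hT f hf (t x y) = f x y.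
Proof.
  destruct (proj2_sig (constructive_indefinite_description _ (proj2 hT Z f hf)))
    as (hg & g_beta & _).
  now split.
Qed.

Definition tensor3_lift {t : X -> Y -> W -> T} (hT : is_tensor3 K X Y W T t)
    {Z : ksl K} (f : X -> Y -> W -> Z) (hf : ktrimorph K f) : T -> Z :=
  proj1_sig (constructive_indefinite_description _ (proj2 hT Z f hf)).

Lemma tensor3_lift_spec {t : X -> Y -> W -> T} (hT : is_tensor3 K X Y W T t)
    {Z : ksl K} (f : X -> Y -> W -> Z) (hf : ktrimorph K f) :
  kmorph K (tensor3_lift hT f hf) /\ forall x y w, tensor3_lift hT f hf (t x y w) = f x y w.
Proof.
  destruct (proj2_sig (constructive_indefinite_description _ (proj2 hT Z f hf)))
    as (hg & g_beta & _).
  now split.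
Qed.

End Tensors.

Definition ternary_morita_data (X Y TXYX TYXY : ksl K)
    (tXYX : X -> Y -> X -> TXYX) (tYXY : Y -> X -> Y -> TYXY)
    (p : TXYX -> X) (q : TYXY -> Y) : Prop :=
  kmorph K p /\ surj p /\ kmorph K q /\ surj q /\
  (forall (x1 x2 x3 : X) (y1 y2 : Y),
     p (tXYX (p (tXYX x1 y1 x2)) y2 x3) = p (tXYX x1 (q (tYXY y1 x2 y2)) x3) /\
     p (tXYX x1 (q (tYXY y1 x2 y2)) x3) = p (tXYX x1 y1 (p (tXYX x2 y2 x3)))) /\
  (forall (x1 x2 : X) (y1 y2 y3 : Y),
     q (tYXY (q (tYXY y1 x1 y2)) x2 y3) = q (tYXY y1 (p (tXYX x1 y2 x2)) y3) /\
     q (tYXY y1 (p (tXYX x1 y2 x2)) y3) = q (tYXY y1 x1 (q (tYXY y2 x2 y3)))) /\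
  (forall x1 x2 : X, (forall (u : X) (v : Y), p (tXYX u v x1) = p (tXYX u v x2)) -> x1 = x2) /\
  (forall x1 x2 : X, (forall (u : X) (v : Y), p (tXYX x1 v u) = p (tXYX x2 v u)) -> x1 = x2) /\
  (forall y1 y2 : Y, (forall (v : Y) (u : X), q (tYXY v u y1) = q (tYXY v u y2)) -> y1 = y2) /\
  (forall y1 y2 : Y, (forall (u : X) (v : Y), q (tYXY y1 u v) = q (tYXY y2 u v)) -> y1 = y2).

Lemma ternary_morita_data_swap (X Y TXYX TYXY : ksl K)
    (tXYX : X -> Y -> X -> TXYX) (tYXY : Y -> X -> Y -> TYXY) (p : TXYX -> X) (q : TYXY -> Y) :
  ternary_morita_data X Y TXYX TYXY tXYX tYXY p q ->
  ternary_morita_data Y X TYXY TXYX tYXY tXYX q p.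
Proof.
  intros (hp & hps & hq & hqs & hpa & hqa & hp3 & hp4 & hq5 & hq6).
  refine (conj hq (conj hqs (conj hp (conj hps
         (conj _ (conj _ (conj hq5 (conj _ (conj hp3 _))))))))); intros *.
  - apply hqa.
  - apply hpa.
  - intro h. apply hq6. intros u v. apply h.
  - intro h. apply hp4. intros u v. apply h.
Qed.

Section MoritaContextToTernary.
Variables (A B X Y TXY TYX TXYX : ksl K).
Variables (lX : A -> X -> X) (rX : X -> B -> X) (pr : X -> Y -> A) (br : Y -> X -> B).
Variables (tXY : X -> Y -> TXY) (tYX : Y -> X -> TYX) (tXYX : X -> Y -> X -> TXYX).
Hypotheses (hXY : is_tensor2 K X Y TXY tXY) (hYX : is_tensor2 K Y X TYX tYX)
  (hXYX : is_tensor3 K X Y X TXYX tXYX).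
Hypotheses (hlX : kbimorph K lX) (hrX : kbimorph K rX) (hbr : kbimorph K br).
Hypothesis rX_br : forall x1 y x2, rX x1 (br y x2) = lX (pr x1 y) x2.
Hypotheses (lX_ess : l_essential K A X lX) (lX_sep : l_separated K A X lX)
  (rX_sep : r_separated K B X rX).
Variables (g : TXY -> A) (h : TYX -> B).
Hypotheses (hg : kmorph K g) (g_beta : forall x y, g (tXY x y) = pr x y) (g_surj : surj g).
Hypotheses (hh : kmorph K h) (h_beta : forall y x, h (tYX y x) = br y x) (h_surj : surj h).

Lemma ktrimorph_rX_br : ktrimorph K (fun x y x' => rX x (br y x')).
Proof.
  split; [|split]; intros.
  - apply hrX.
  - exact (kmorph_comp (proj1 hbr _) (proj2 hrX _)).
  - exact (kmorph_comp (proj2 hbr _) (proj2 hrX _)).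
Qed.

Definition ternary_of_context : TXYX -> X := tensor3_lift hXYX _ ktrimorph_rX_br.

Lemma kmorph_ternary_of_context : kmorph K ternary_of_context.
Proof. apply tensor3_lift_spec. Qed.

Lemma ternary_of_context_r x y x' : ternary_of_context (tXYX x y x') = rX x (br y x').
Proof. apply tensor3_lift_spec. Qed.

Lemma ternary_of_context_l x y x' : ternary_of_context (tXYX x y x') = lX (pr x y) x'.
Proof. now rewrite ternary_of_context_r. Qed.

Lemma ternary_of_context_surj : surj ternary_of_context.
Proof.
  assert (hlX_range : forall a x', exists w, ternary_of_context w = lX a x').
  { intros a x'. revert a. apply (tensor2_surj_ind tXY hXY g); auto.
    - exact (join_closed_image _ (fun a => lX a x') kmorph_ternary_of_context (proj1 hlX x')).
    - intros u v. exists (tXYX u v x'). now rewrite g_beta, ternary_of_context_l. }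
  intro x. destruct (lX_ess x) as (S & hS & hSgen & hx).
  apply (join_closed_image _ _ kmorph_ternary_of_context kmorph_id S x hS hx).
  intros s hs. destruct (hSgen s hs) as (a & x' & ->). apply hlX_range.
Qed.

Lemma ternary_of_context_sep_r x1 x2 :
  (forall u v, ternary_of_context (tXYX u v x1) = ternary_of_context (tXYX u v x2)) -> x1 = x2.
Proof.
  intro H. apply lX_sep. apply (tensor2_surj_ind tXY hXY g); auto.
  - exact (join_closed_eq _ _ (proj1 hlX x1) (proj1 hlX x2)).
  - intros u v. rewrite g_beta, <- !ternary_of_context_l. apply H.
Qed.

Lemma ternary_of_context_sep_l x1 x2 :
  (forall v u, ternary_of_context (tXYX x1 v u) = ternary_of_context (tXYX x2 v u)) -> x1 = x2.
Proof.
  intro H. apply rX_sep. apply (tensor2_surj_ind tYX hYX h); auto.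
  - exact (join_closed_eq _ _ (proj2 hrX x1) (proj2 hrX x2)).
  - intros v u. rewrite h_beta, <- !ternary_of_context_r. apply H.
Qed.

Lemma exists_ternary_of_context : exists p : TXYX -> X,
  kmorph K p /\ surj p /\
  (forall x y x', p (tXYX x y x') = rX x (br y x')) /\
  (forall x y x', p (tXYX x y x') = lX (pr x y) x') /\
  (forall x1 x2, (forall u v, p (tXYX u v x1) = p (tXYX u v x2)) -> x1 = x2) /\
  (forall x1 x2, (forall v u, p (tXYX x1 v u) = p (tXYX x2 v u)) -> x1 = x2).
Proof.
  exists ternary_of_context.
  split; [exact kmorph_ternary_of_context|]. split; [exact ternary_of_context_surj|].
  split; [exact ternary_of_context_r|]. split; [exact ternary_of_context_l|].
  split; [exact ternary_of_context_sep_r | exact ternary_of_context_sep_l].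
Qed.

End MoritaContextToTernary.

Section OperatorQuantale.
Variables (M N TMN TMNM TNMN : ksl K).
Variables (tMN : M -> N -> TMN) (tMNM : M -> N -> M -> TMNM) (tNMN : N -> M -> N -> TNMN).
Hypotheses (hMN : is_tensor2 K M N TMN tMN) (hMNM : is_tensor3 K M N M TMNM tMNM)
  (hNMN : is_tensor3 K N M N TNMN tNMN).
Variables (p : TMNM -> M) (q : TNMN -> N).
Hypothesis hpq : ternary_morita_data M N TMNM TNMN tMNM tNMN p q.

Lemma kmorph_p : kmorph K p.
Proof. apply hpq. Qed.

Lemma surj_p : surj p.
Proof. apply hpq. Qed.

Lemma kmorph_q : kmorph K q.
Proof. apply hpq. Qed.

Lemma surj_q : surj q.
Proof. apply hpq. Qed.

Lemma p_assoc x1 x2 x3 y1 y2 :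
  p (tMNM (p (tMNM x1 y1 x2)) y2 x3) = p (tMNM x1 y1 (p (tMNM x2 y2 x3))).
Proof.
  destruct hpq as (_ & _ & _ & _ & h & _). destruct (h x1 x2 x3 y1 y2) as [e1 e2]. now rewrite e1.
Qed.

Lemma p_q x1 x2 x3 y1 y2 :
  p (tMNM x1 (q (tNMN y1 x2 y2)) x3) = p (tMNM x1 y1 (p (tMNM x2 y2 x3))).
Proof. destruct hpq as (_ & _ & _ & _ & h & _). apply h. Qed.

Lemma q_p x1 x2 y1 y2 y3 :
  q (tNMN (q (tNMN y1 x1 y2)) x2 y3) = q (tNMN y1 (p (tMNM x1 y2 x2)) y3).
Proof. destruct hpq as (_ & _ & _ & _ & _ & h & _). apply h. Qed.

Lemma p_sep x1 x2 : (forall u v, p (tMNM u v x1) = p (tMNM u v x2)) -> x1 = x2.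
Proof. destruct hpq as (_ & _ & _ & _ & _ & _ & h & _). apply h. Qed.

Lemma q_sep y1 y2 : (forall u v, q (tNMN y1 u v) = q (tNMN y2 u v)) -> y1 = y2.
Proof. destruct hpq as (_ & _ & _ & _ & _ & _ & _ & _ & _ & h). apply h. Qed.

Lemma kmorph_p_1 n m : kmorph K (fun x => p (tMNM x n m)).
Proof. exact (kmorph_comp (proj1 (proj1 hMNM) n m) kmorph_p). Qed.

Lemma kmorph_p_2 m m' : kmorph K (fun y => p (tMNM m y m')).
Proof. exact (kmorph_comp (proj1 (proj2 (proj1 hMNM)) m m') kmorph_p). Qed.

Lemma kmorph_p_3 m n : kmorph K (fun x => p (tMNM m n x)).
Proof. exact (kmorph_comp (proj2 (proj2 (proj1 hMNM)) m n) kmorph_p). Qed.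

Lemma kmorph_q_1 m n : kmorph K (fun y => q (tNMN y m n)).
Proof. exact (kmorph_comp (proj1 (proj1 hNMN) m n) kmorph_q). Qed.

Lemma kmorph_q_2 n n' : kmorph K (fun x => q (tNMN n x n')).
Proof. exact (kmorph_comp (proj1 (proj2 (proj1 hNMN)) n n') kmorph_q). Qed.

Lemma kmorph_q_3 n m : kmorph K (fun y => q (tNMN n m y)).
Proof. exact (kmorph_comp (proj2 (proj2 (proj1 hNMN)) n m) kmorph_q). Qed.

Lemma kbimorph_p_partial : kbimorph K (fun u v => (fun m => p (tMNM u v m)) : fun_ksl M M).
Proof. split; intro; apply kmorph_into_fun; intro; [apply kmorph_p_1 | apply kmorph_p_2]. Qed.

Lemma kbimorph_q_partial : kbimorph K (fun u v => (fun n => q (tNMN n u v)) : fun_ksl N N).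
Proof. split; intro; apply kmorph_into_fun; intro; [apply kmorph_q_2 | apply kmorph_q_3]. Qed.

Definition opM : TMN -> fun_ksl M M := tensor2_lift hMN _ kbimorph_p_partial.
Definition opN : TMN -> fun_ksl N N := tensor2_lift hMN _ kbimorph_q_partial.

Lemma kmorph_opM : kmorph K opM.
Proof. apply tensor2_lift_spec. Qed.

Lemma kmorph_opN : kmorph K opN.
Proof. apply tensor2_lift_spec. Qed.

Lemma opM_beta u v m : opM (tMN u v) m = p (tMNM u v m).
Proof. unfold opM. now rewrite (proj2 (tensor2_lift_spec _ _ _)). Qed.

Lemma opN_beta u v n : opN (tMN u v) n = q (tNMN n u v).
Proof. unfold opN. now rewrite (proj2 (tensor2_lift_spec _ _ _)). Qed.

Lemma kmorph_opM_at m : kmorph K (fun t => opM t m).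
Proof. exact (kmorph_comp kmorph_opM (kmorph_eval M M m)). Qed.

Lemma kmorph_opN_at n : kmorph K (fun t => opN t n).
Proof. exact (kmorph_comp kmorph_opN (kmorph_eval N N n)). Qed.

Lemma kmorph_opM_each t : kmorph K (opM t).
Proof.
  revert t. apply (tensor2_ind tMN hMN).
  - exact (join_closed_comp opM _ kmorph_opM join_closed_kmorph).
  - intros u v. apply (kmorph_ext _ _ (kmorph_p_3 u v)). intro; now rewrite opM_beta.
Qed.

Lemma kmorph_opN_each t : kmorph K (opN t).
Proof.
  revert t. apply (tensor2_ind tMN hMN).
  - exact (join_closed_comp opN _ kmorph_opN join_closed_kmorph).
  - intros u v. apply (kmorph_ext _ _ (kmorph_q_1 u v)). intro; now rewrite opN_beta.
Qed.

Lemma p_opM t m n x : p (tMNM (opM t m) n x) = opM t (p (tMNM m n x)).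
Proof.
  revert t. apply (tensor2_ind tMN hMN).
  - exact (join_closed_eq _ _ (kmorph_comp (kmorph_opM_at m) (kmorph_p_1 n x)) (kmorph_opM_at _)).
  - intros u v. rewrite !opM_beta. apply p_assoc.
Qed.

Lemma p_opN t m n x : p (tMNM m (opN t n) x) = p (tMNM m n (opM t x)).
Proof.
  revert t. apply (tensor2_ind tMN hMN).
  - exact (join_closed_eq _ _ (kmorph_comp (kmorph_opN_at n) (kmorph_p_2 m x))
                                (kmorph_comp (kmorph_opM_at x) (kmorph_p_3 m n))).
  - intros u v. rewrite opN_beta, opM_beta. apply p_q.
Qed.

Lemma q_opN t n m n' : q (tNMN (opN t n) m n') = q (tNMN n (opM t m) n').
Proof.
  revert t. apply (tensor2_ind tMN hMN).
  - exact (join_closed_eq _ _ (kmorph_comp (kmorph_opN_at n) (kmorph_q_1 m n'))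
                                (kmorph_comp (kmorph_opM_at m) (kmorph_q_2 n n'))).
  - intros u v. rewrite opN_beta, opM_beta. apply q_p.
Qed.

Lemma opM_comp_range t s :
  exists r, opM r = ((fun m => opM t (opM s m)) : fun_ksl M M).
Proof.
  revert s. apply (tensor2_ind tMN hMN).
  - apply (join_closed_image _ _ kmorph_opM). apply kmorph_into_fun. intro m.
    exact (kmorph_comp (kmorph_opM_at m) (kmorph_opM_each t)).
  - intros u v. exists (tMN (opM t u) v). apply functional_extensionality. intro m.
    now rewrite !opM_beta, p_opM.
Qed.

Definition in_range_opM (f : fun_ksl M M) : Prop := exists t, opM t = f.

Definition op_quantale : ksl K :=
  sub_ksl (fun_ksl M M) in_range_opM (join_closed_image _ _ kmorph_opM kmorph_id).

Definition op_act (a : op_quantale) (m : M) : M := proj1_sig a m.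

Definition op_of (t : TMN) : op_quantale := exist in_range_opM (opM t) (ex_intro _ t eq_refl).

Definition op_pre (a : op_quantale) : TMN :=
  proj1_sig (constructive_indefinite_description _ (proj2_sig a)).

Lemma op_act_pre a m : op_act a m = opM (op_pre a) m.
Proof.
  unfold op_act, op_pre.
  now rewrite (proj2_sig (constructive_indefinite_description _ (proj2_sig a))).
Qed.

Lemma op_ext (a b : op_quantale) : (forall m, op_act a m = op_act b m) -> a = b.
Proof. intro H. apply proj1_sig_inj, functional_extensionality, H. Qed.

Lemma op_of_pre a : op_of (op_pre a) = a.
Proof. apply op_ext. intro m. now rewrite (op_act_pre a). Qed.

Lemma kmorph_op_act_at m : kmorph K (fun a : op_quantale => op_act a m).
Proof. exact (kmorph_comp (kmorph_val _ _ _) (kmorph_eval M M m)). Qed.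

Lemma kmorph_op_act a : kmorph K (op_act a).
Proof. apply (kmorph_ext _ _ (kmorph_opM_each (op_pre a))). intro; now rewrite op_act_pre. Qed.

Lemma kmorph_into_op_quantale {X : ksl K} (h : X -> op_quantale) :
  (forall m, kmorph K (fun x => op_act (h x) m)) -> kmorph K h.
Proof. intro H. now apply kmorph_into_sub, kmorph_into_fun. Qed.

Lemma kmorph_op_of : kmorph K op_of.
Proof. apply kmorph_into_op_quantale. exact kmorph_opM_at. Qed.

Lemma comp_in_range_opM (a b : op_quantale) : in_range_opM (fun m => op_act a (op_act b m)).
Proof.
  destruct (opM_comp_range (op_pre a) (op_pre b)) as [r hr]. exists r. rewrite hr.
  apply functional_extensionality. intro m. now rewrite !op_act_pre.
Qed.

Definition op_mul (a b : op_quantale) : op_quantale := exist _ _ (comp_in_range_opM a b).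

Lemma op_act_mul a b m : op_act (op_mul a b) m = op_act a (op_act b m).
Proof. reflexivity. Qed.

Lemma op_mul_assoc a b c : op_mul a (op_mul b c) = op_mul (op_mul a b) c.
Proof. now apply op_ext. Qed.

Lemma kbimorph_op_mul : kbimorph K op_mul.
Proof.
  split; intro; apply kmorph_into_op_quantale; intro m.
  - apply kmorph_op_act_at.
  - exact (kmorph_comp (kmorph_op_act_at m) (kmorph_op_act _)).
Qed.

Definition op_pair (m : M) (n : N) : op_quantale := op_of (tMN m n).

Lemma op_act_pair m n x : op_act (op_pair m n) x = p (tMNM m n x).
Proof. apply opM_beta. Qed.

Lemma kbimorph_op_pair : kbimorph K op_pair.
Proof.
  split; intro.
  - exact (kmorph_comp (proj1 (proj1 hMN) _) kmorph_op_of).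
  - exact (kmorph_comp (proj2 (proj1 hMN) _) kmorph_op_of).
Qed.

Lemma p_op_act a m n x : p (tMNM (op_act a m) n x) = op_act a (p (tMNM m n x)).
Proof. rewrite !op_act_pre. apply p_opM. Qed.

Lemma op_pair_p u1 v1 u2 v : op_pair (p (tMNM u1 v1 u2)) v = op_mul (op_pair u1 v1) (op_pair u2 v).
Proof. apply op_ext. intro m. now rewrite op_act_mul, !op_act_pair, p_assoc. Qed.

(* Does not depend on the chosen preimage [op_pre a]: by [q_op_ract] it is determined by
   [op_act a], because [q] separates points ([q_sep]). *)
Definition op_ract (n : N) (a : op_quantale) : N := opN (op_pre a) n.

Lemma q_op_ract n a m n' : q (tNMN (op_ract n a) m n') = q (tNMN n (op_act a m) n').
Proof. unfold op_ract. now rewrite q_opN, op_act_pre. Qed.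

Lemma p_op_ract m n a x : p (tMNM m (op_ract n a) x) = p (tMNM m n (op_act a x)).
Proof. unfold op_ract. now rewrite p_opN, op_act_pre. Qed.

Lemma op_ract_pair n m n' : op_ract n (op_pair m n') = q (tNMN n m n').
Proof. apply q_sep. intros u v. now rewrite q_op_ract, op_act_pair, q_p. Qed.

Lemma op_pair_act a m n : op_pair (op_act a m) n = op_mul a (op_pair m n).
Proof. apply op_ext. intro x. now rewrite op_act_mul, !op_act_pair, p_op_act. Qed.

Lemma op_pair_ract m n a : op_pair m (op_ract n a) = op_mul (op_pair m n) a.
Proof. apply op_ext. intro x. now rewrite op_act_mul, !op_act_pair, p_op_ract. Qed.

Lemma op_ract_mul n a b : op_ract n (op_mul a b) = op_ract (op_ract n a) b.
Proof. apply q_sep. intros u v. now rewrite !q_op_ract. Qed.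

Lemma kbimorph_op_ract : kbimorph K op_ract.
Proof.
  split; [intro a; exact (kmorph_opN_each (op_pre a)) | intro n].
  apply (kmorph_of_separating (M * N) (fun i y => q (tNMN y (fst i) (snd i)))).
  - intro i. apply kmorph_q_1.
  - intros y1 y2 H. apply q_sep. intros u v. exact (H (u, v)).
  - intro i. apply (kmorph_ext (fun a => q (tNMN n (op_act a (fst i)) (snd i)))).
    + exact (kmorph_comp (kmorph_op_act_at _) (kmorph_q_2 _ _)).
    + intro a. symmetry. apply q_op_ract.
Qed.

Lemma surj_op_of : surj op_of.
Proof. intro a. exists (op_pre a). apply op_of_pre. Qed.

Lemma op_act_sep : l_separated K op_quantale M op_act.
Proof. intros m1 m2 H. apply p_sep. intros u v. rewrite <- !op_act_pair. apply H. Qed.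

Lemma op_act_ess : l_essential K op_quantale M op_act.
Proof.
  intro m. apply (tensor3_surj_ind tMNM hMNM p _ kmorph_p surj_p (join_closed_small_join_of _)).
  intros u v x. apply small_join_of_mem. exists (op_pair u v), x. now rewrite op_act_pair.
Qed.

Lemma op_ract_sep : r_separated K op_quantale N op_ract.
Proof. intros n1 n2 H. apply q_sep. intros u v. rewrite <- !op_ract_pair. apply H. Qed.

Lemma op_ract_ess : r_essential K op_quantale N op_ract.
Proof.
  intro n. apply (tensor3_surj_ind tNMN hNMN q _ kmorph_q surj_q (join_closed_small_join_of _)).
  intros v u v'. apply small_join_of_mem. exists v, (op_pair u v'). now rewrite op_ract_pair.
Qed.

Lemma op_mul_sep_l : l_separated K op_quantale op_quantale op_mul.
Proof.
  intros a b H. apply op_ext. intro x. apply p_sep. intros u v. rewrite <- !op_act_pair.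
  exact (f_equal (fun c => op_act c x) (H (op_pair u v))).
Qed.

Lemma op_mul_sep_r : r_separated K op_quantale op_quantale op_mul.
Proof.
  intros a b H. apply op_ext.
  apply (tensor3_surj_ind tMNM hMNM p _ kmorph_p surj_p).
  - exact (join_closed_eq _ _ (kmorph_op_act a) (kmorph_op_act b)).
  - intros u v w. rewrite <- op_act_pair.
    exact (f_equal (fun c => op_act c w) (H (op_pair u v))).
Qed.

Lemma op_mul_ess (a : op_quantale) : small_join_of (fun z => exists b c, z = op_mul b c) a.
Proof.
  revert a.
  apply (tensor2_surj_ind tMN hMN op_of _ kmorph_op_of surj_op_of (join_closed_small_join_of _)).
  intros u v. change (op_of (tMN u v)) with (op_pair u v). revert u.
  apply (tensor3_surj_ind tMNM hMNM p _ kmorph_p surj_p).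
  - exact (join_closed_comp (fun u => op_pair u v) _ (proj1 kbimorph_op_pair v)
                            (join_closed_small_join_of _)).
  - intros u1 v1 u2. apply small_join_of_mem.
    exists (op_pair u1 v1), (op_pair u2 v). apply op_pair_p.
Qed.

Lemma mregular_op_quantale : mregular_kquantale K op_quantale op_mul.
Proof.
  split; [exact (conj kbimorph_op_mul op_mul_assoc)|].
  refine (conj (conj kbimorph_op_mul (fun a b c => eq_sym (op_mul_assoc a b c)))
         (conj (conj kbimorph_op_mul op_mul_assoc)
         (conj (fun a b c => eq_sym (op_mul_assoc a b c))
         (conj (conj op_mul_ess op_mul_sep_l) (conj op_mul_ess op_mul_sep_r))))).
Qed.

Lemma exists_operator_quantale :
  exists (Q : ksl K) (mulQ : Q -> Q -> Q) (lM : Q -> M -> M) (rN : N -> Q -> N) (prQ : M -> N -> Q),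
    mregular_kquantale K Q mulQ /\
    is_lmodule K Q mulQ M lM /\ l_mregular K Q M lM /\
    is_rmodule K Q mulQ N rN /\ r_mregular K Q N rN /\
    kbimorph K prQ /\
    (forall a m n, prQ (lM a m) n = mulQ a (prQ m n)) /\
    (forall m n a, prQ m (rN n a) = mulQ (prQ m n) a) /\
    (exists g : TMN -> Q, kmorph K g /\ (forall m n, g (tMN m n) = prQ m n) /\ surj g) /\
    (forall a b : Q, (forall m, lM a m = lM b m) -> a = b) /\
    (forall m n m', lM (prQ m n) m' = p (tMNM m n m')) /\
    (forall n m n', rN n (prQ m n') = q (tNMN n m n')) /\
    (forall a m n m', p (tMNM (lM a m) n m') = lM a (p (tMNM m n m'))) /\
    (forall n a m n', q (tNMN (rN n a) m n') = q (tNMN n (lM a m) n')).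
Proof.
  exists op_quantale, op_mul, op_act, op_ract, op_pair.
  refine (conj mregular_op_quantale
         (conj (conj (conj kmorph_op_act_at kmorph_op_act) op_act_mul)
         (conj (conj op_act_ess op_act_sep)
         (conj (conj kbimorph_op_ract op_ract_mul)
         (conj (conj op_ract_ess op_ract_sep)
         (conj kbimorph_op_pair
         (conj op_pair_act
         (conj op_pair_ract
         (conj _
         (conj op_ext
         (conj op_act_pair
         (conj op_ract_pair
         (conj p_op_act q_op_ract))))))))))))).
  exists op_of. exact (conj kmorph_op_of (conj (fun m n => eq_refl) surj_op_of)).
Qed.

End OperatorQuantale.
Section MoritaPairs.
Variables (X Y TXY TYX TXYX TYXY : ksl K).
Variables (tXY : X -> Y -> TXY) (tYX : Y -> X -> TYX)
  (tXYX : X -> Y -> X -> TXYX) (tYXY : Y -> X -> Y -> TYXY).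
Hypotheses (hXY : is_tensor2 K X Y TXY tXY) (hYX : is_tensor2 K Y X TYX tYX)
  (hXYX : is_tensor3 K X Y X TXYX tXYX) (hYXY : is_tensor3 K Y X Y TYXY tYXY).

Lemma ternary_of_morita_pair :
  morita_pair K X Y TXY tXY TYX tYX -> exists p q, ternary_morita_data X Y TXYX TYXY tXYX tYXY p q.
Proof.
  intros (A & mulA & B & mulB & lX & rX & lY & rY & pr & br & _ & _ & hX & hY & hpr & hbr
          & pr_lX & pr_rY & br_lY & br_rX & _ & _ & rX_br & rY_pr
          & (g & hg & g_beta & g_surj) & (h & hh & h_beta & h_surj)).
  destruct hX as ((hlX & _) & (hrX & rX_mul) & _ & (lX_ess & lX_sep) & (_ & rX_sep)).
  destruct hY as ((hlY & _) & (hrY & rY_mul) & _ & (lY_ess & lY_sep) & (_ & rY_sep)).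
  destruct (exists_ternary_of_context _ _ _ _ _ _ _ _ _ _ _ _ _ _ hXY hYX hXYX hlX hrX hbr rX_br
              lX_ess lX_sep rX_sep _ _ hg g_beta g_surj hh h_beta h_surj)
    as (p & hp & p_surj & p_r & p_l & p_sep_r & p_sep_l).
  destruct (exists_ternary_of_context _ _ _ _ _ _ _ _ _ _ _ _ _ _ hYX hXY hYXY hlY hrY hpr rY_pr
              lY_ess lY_sep rY_sep _ _ hh h_beta h_surj hg g_beta g_surj)
    as (q & hq & q_surj & q_r & q_l & q_sep_r & q_sep_l).
  exists p, q.
  refine (conj hp (conj p_surj (conj hq (conj q_surj
         (conj _ (conj _ (conj p_sep_r (conj _ (conj q_sep_r q_sep_l))))))))).
  - intros x1 x2 x3 y1 y2. rewrite q_l, !p_r, br_lY, br_rX, <- rX_mul. now split.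
  - intros x1 x2 y1 y2 y3. rewrite p_l, !q_r, pr_lX, pr_rY, <- rY_mul. now split.
  - intros x1 x2 H. apply p_sep_l. intros v u. apply H.
Qed.

Lemma morita_pair_of_ternary :
  (exists p q, ternary_morita_data X Y TXYX TYXY tXYX tYXY p q) ->
  morita_pair K X Y TXY tXY TYX tYX.
Proof.
  intros (p & q & hpq).
  destruct (exists_operator_quantale _ _ _ _ _ _ _ _ hXY hXYX hYXY _ _ hpq)
    as (A & mulA & lX & rY & pr & hA & hlX & hlX_reg & hrY & hrY_reg & hpr & pr_lX & pr_rY & hg
        & lX_faithful & lX_pr & rY_pr & p_lX & q_rY).
  destruct (exists_operator_quantale _ _ _ _ _ _ _ _ hYX hYXY hXYX _ _
              (ternary_morita_data_swap _ _ _ _ _ _ _ _ hpq))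
    as (B & mulB & lY & rX & br & hB & hlY & hlY_reg & hrX & hrX_reg & hbr & br_lY & br_rX & hh
        & lY_faithful & lY_br & rX_br & q_lY & p_rX).
  destruct hpq as (_ & _ & _ & _ & _ & _ & _ & p_sep_l & _ & q_sep_l).
  assert (X_comm : forall a x b, rX (lX a x) b = lX a (rX x b)).
  { intros a x b. apply p_sep_l. intros u v. now rewrite p_rX, !p_lX, p_rX. }
  assert (Y_comm : forall b y a, rY (lY b y) a = lY b (rY y a)).
  { intros b y a. apply q_sep_l. intros u v. now rewrite q_rY, !q_lY, q_rY. }
  exists A, mulA, B, mulB, lX, rX, lY, rY, pr, br.
  refine (conj hA (conj hB
         (conj (conj hlX (conj hrX (conj X_comm (conj hlX_reg hrX_reg))))
         (conj (conj hlY (conj hrY (conj Y_comm (conj hlY_reg hrY_reg))))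
         (conj hpr (conj hbr (conj pr_lX (conj pr_rY (conj br_lY (conj br_rX
         (conj _ (conj _ (conj _ (conj _ (conj hg hh))))))))))))))).
  - intros x b y. apply lX_faithful. intro x'. now rewrite !lX_pr, p_rX.
  - intros y a x. apply lY_faithful. intro y'. now rewrite !lY_br, q_rY.
  - intros x1 y x2. now rewrite rX_br, lX_pr.
  - intros y1 x y2. now rewrite rY_pr, lY_br.
Qed.

End MoritaPairs.
End Kappa.

Theorem theorem3 (K : Type) (hK : infinite_regular K) (X Y : ksl K)
  (TXY : ksl K) (tXY : X -> Y -> TXY) (hXY : is_tensor2 K X Y TXY tXY)
  (TYX : ksl K) (tYX : Y -> X -> TYX) (hYX : is_tensor2 K Y X TYX tYX)
  (TXYX : ksl K) (tXYX : X -> Y -> X -> TXYX) (hXYX : is_tensor3 K X Y X TXYX tXYX)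
  (TYXY : ksl K) (tYXY : Y -> X -> Y -> TYXY) (hYXY : is_tensor3 K Y X Y TYXY tYXY) :
  morita_pair K X Y TXY tXY TYX tYX <->
  exists (p : TXYX -> X) (q : TYXY -> Y),
    kmorph K p /\ surj p /\ kmorph K q /\ surj q /\
    (forall (x1 x2 x3 : X) (y1 y2 : Y),
       p (tXYX (p (tXYX x1 y1 x2)) y2 x3) = p (tXYX x1 (q (tYXY y1 x2 y2)) x3) /\
       p (tXYX x1 (q (tYXY y1 x2 y2)) x3) = p (tXYX x1 y1 (p (tXYX x2 y2 x3)))) /\
    (forall (x1 x2 : X) (y1 y2 y3 : Y),
       q (tYXY (q (tYXY y1 x1 y2)) x2 y3) = q (tYXY y1 (p (tXYX x1 y2 x2)) y3) /\
       q (tYXY y1 (p (tXYX x1 y2 x2)) y3) = q (tYXY y1 x1 (q (tYXY y2 x2 y3)))) /\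
    (forall x1 x2 : X, (forall (u : X) (v : Y), p (tXYX u v x1) = p (tXYX u v x2)) -> x1 = x2) /\
    (forall x1 x2 : X, (forall (u : X) (v : Y), p (tXYX x1 v u) = p (tXYX x2 v u)) -> x1 = x2) /\
    (forall y1 y2 : Y, (forall (v : Y) (u : X), q (tYXY v u y1) = q (tYXY v u y2)) -> y1 = y2) /\
    (forall y1 y2 : Y, (forall (u : X) (v : Y), q (tYXY y1 u v) = q (tYXY y2 u v)) -> y1 = y2).
Proof.
  split.
  - exact (ternary_of_morita_pair K X Y TXY TYX TXYX TYXY tXY tYX tXYX tYXY hXY hYX hXYX hYXY).
  - exact (morita_pair_of_ternary K hK X Y TXY TYX TXYX TYXY tXY tYX tXYX tYXY hXY hYX hXYX hYXY).
Qed.
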